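(* Consider a Markov decision process with continuous state space $\mathcal{S}$, continuous action space $\mathcal{A}$, transition density $p(\mathbf{s}'|\mathbf{s},\mathbf{a})$ and discount factor $\gamma\in(0,1)$, and let $r_1,r_2$ be bounded reward functions with optimal soft Q-functions (temperature $1$) $Q_1^*, Q_2^*$ and optimal soft policies $\pi_i^*(\mathbf{a}|\mathbf{s})\propto\exp(Q_i^*(\mathbf{s},\mathbf{a}))$. Let $Q_\Sigma=\frac12(Q_1^*+Q_2^* )$, $r_\mathcal{C}=\frac12(r_1+r_2)$, let $Q_\mathcal{C}^*$ be the optimal soft Q-function for $r_\mathcal{C}$, and let $\pi_\Sigma(\mathbf{a}|\mathbf{s}) \propto \exp(Q_\Sigma(\mathbf{s},\mathbf{a}))$ be the composed policy. Let $C^*$ be the fixed point of $$C(\mathbf{s},\mathbf{a}) \leftarrow \gamma\, \mathbb{E}_{\mathbf{s}'\sim p(\mathbf{s}'|\mathbf{s},\mathbf{a})}\Big[ D_{1/2}\big(\pi_1^*(\cdot|\mathbf{s}')\,\|\,\pi_2^*(\cdot|\mathbf{s}')\big) + \max_{\mathbf{a}'\in\mathcal{A}} C(\mathbf{s}',\mathbf{a}')\Big],$$ and let $D^*$ be the fixed point of $$D(\mathbf{s},\mathbf{a}) \leftarrow \gamma\,\mathbb{E}_{\mathbf{s}'\sim p(\mathbf{s}'|\mathbf{s},\mathbf{a})}\Big[\mathbb{E}_{\mathbf{a}'\sim\pi_\Sigma(\mathbf{a}'|\mathbf{s}')}\big[C^*(\mathbf{s}',\mathbf{a}') + D(\mathbf{s}',\mathbf{a}')\big]\Big].$$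 Then the soft Q-function $Q_\mathcal{C}^{\pi_\Sigma}$ of the policy $\pi_\Sigma$ for the reward $r_\mathcal{C}$ satisfies, for all $\mathbf{s}\in\mathcal{S}$, $\mathbf{a}\in\mathcal{A}$, $$Q_\mathcal{C}^{\pi_\Sigma}(\mathbf{s},\mathbf{a}) \ge Q_\mathcal{C}^*(\mathbf{s},\mathbf{a}) - D^*(\mathbf{s},\mathbf{a}).$$
   Context: Soft (maximum-entropy) reinforcement learning with temperature $1$: for a bounded reward $r$, the soft Bellman backup maps a bounded $Q$ to $r(\mathbf{s},\mathbf{a}) + \gamma\,\mathbb{E}_{\mathbf{s}'\sim p(\cdot|\mathbf{s},\mathbf{a})}[\log\int_{\mathcal{A}}\exp(Q(\mathbf{s}',\mathbf{a}'))\,d\mathbf{a}']$; the optimal soft Q-function for $r$ is its unique fixed point, and the optimal soft policy is proportional to $\exp$ of it. For a policy $\pi$, its soft Q-function $Q^\pi$ for reward $r$ is the fixed point of the soft policy evaluation operator $Q(\mathbf{s},\mathbf{a}) \leftarrow r(\mathbf{s},\mathbf{a}) + \gamma\,\mathbb{E}_{\mathbf{s}'\sim p(\cdot|\mathbf{s},\mathbf{a})}\big[\mathbb{E}_{\mathbf{a}'\sim\pi(\cdot|\mathbf{s}')}[Q(\mathbf{s}',\mathbf{a}') - \log\pi(\mathbf{a}'|\mathbf{s}')]\big]$. $D_{1/2}(p\|q) = -2\log\int\sqrt{p q}$ is the Rényi divergence of order $1/2$. *)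

From HB Require Import structures.
From mathcomp Require Import all_boot all_order all_algebra.
From mathcomp Require Import all_classical all_reals all_analysis.
Set Implicit Arguments. Unset Strict Implicit. Unset Printing Implicit Defensive.
Import Order.TTheory GRing.Theory Num.Theory.
Local Open Scope classical_set_scope.
Local Open Scope ring_scope.

Section SoftMDP.
Context {d1 d2 : measure_display} {R : realType}
  {S : measurableType d1} {A : measurableType d2}.
Variables (muS : {measure set S -> \bar R}) (muA : {measure set A -> \bar R}).

Definition is_transition_density (p : S -> A -> S -> R) : Prop :=
  [/\ measurable_fun setT (fun x : (S * A) * S => p x.1.1 x.1.2 x.2),
      (forall s a s', 0 <= p s a s') &
      (forall s a, (\int[muS]_s' (p s a s')%:E = 1)%E)].

Definition Enext (p : S -> A -> S -> R) (s : S) (a : A) (f : S -> R) : R :=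
  Rintegral muS setT (fun s' => p s a s' * f s').

Definition Eact (pi : S -> A -> R) (s : S) (f : A -> R) : R :=
  Rintegral muA setT (fun a => pi s a * f a).

Definition soft_value (Q : S -> A -> R) (s : S) : R :=
  ln (Rintegral muA setT (fun a => expR (Q s a))).

Definition soft_policy (Q : S -> A -> R) (s : S) (a : A) : R :=
  expR (Q s a) / Rintegral muA setT (fun a' => expR (Q s a')).

Definition soft_bellman (gamma : R) (p : S -> A -> S -> R) (r Q : S -> A -> R)
  (s : S) (a : A) : R :=
  r s a + gamma * Enext p s a (soft_value Q).

Definition soft_eval (gamma : R) (p : S -> A -> S -> R) (r pi Q : S -> A -> R)
  (s : S) (a : A) : R :=
  r s a + gamma * Enext p s a
    (fun s' => Eact pi s' (fun a' => Q s' a' - ln (pi s' a'))).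

Definition renyi_half (f g : A -> R) : R :=
  - 2 * ln (Rintegral muA setT (fun a => Num.sqrt (f a * g a))).

Definition C_backup (gamma : R) (p : S -> A -> S -> R) (pi1 pi2 C : S -> A -> R)
  (s : S) (a : A) : R :=
  gamma * Enext p s a
    (fun s' => renyi_half (pi1 s') (pi2 s') + sup (range (C s'))).

Definition D_backup (gamma : R) (p : S -> A -> S -> R) (pi Cs D : S -> A -> R)
  (s : S) (a : A) : R :=
  gamma * Enext p s a (fun s' => Eact pi s' (fun a' => Cs s' a' + D s' a')).

End SoftMDP.

Definition bounded2 {R : realType} {S A : Type} (f : S -> A -> R) : Prop :=
  exists M : R, forall s a, `|f s a| <= M.

Definition measurable2 {d1 d2 : measure_display} {R : realType}
  {S : measurableType d1} {A : measurableType d2} (f : S -> A -> R) : Prop :=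
  measurable_fun setT (fun x : S * A => f x.1 x.2).

From HB Require Import structures.
From mathcomp Require Import all_boot all_order all_algebra.
From mathcomp Require Import all_classical all_reals all_analysis.
From mathcomp Require Import measurable_realfun ring lra.
Import Order.TTheory GRing.Theory Num.Theory.
Local Open Scope classical_set_scope.
Local Open Scope ring_scope.

(* Write V_Q(s) = log \int exp Q(s,.) and let Q_Sigma be the mean of Q_1^* and
   Q_2^*.  The inequalities Q_C^* <= Q_Sigma, Q_Sigma - Q_C^* <= C^* and
   Q_C^* - Q^pi_Sigma <= D^* are proved in turn by one comparison principle: the
   bounded difference u of the two sides satisfies "u <= c everywhere implies
   u <= gamma c everywhere", so sup u <= gamma sup u and u <= 0.  The one-step
   estimates rest on three facts: Q |-> V_Q is monotone and midpoint convex
   (V_{Q_Sigma} <= (V_1 + V_2)/2, by AM-GM under the integral),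
   D_{1/2}(pi_1 || pi_2) = V_1 + V_2 - 2 V_{Q_Sigma}, and
   log pi_Sigma = Q_Sigma - V_{Q_Sigma}. *)

Section bounded_measurable.
Context {R : realType} {d : measure_display} {T : measurableType d}.
Implicit Types (f g : T -> R) (c : R).

Definition bounded_measurable f :=
  measurable_fun setT f /\ exists M : R, forall x, `|f x| <= M.

Lemma bounded_measurable_cst c : bounded_measurable (fun=> c).
Proof. by split; [exact: measurable_cst | exists `|c|]. Qed.

Lemma bounded_measurableD {f g} : bounded_measurable f -> bounded_measurable g ->
  bounded_measurable (fun x => f x + g x).
Proof.
move=> [mf [M hM]] [mg [N hN]]; split; first exact: measurable_funD.
by exists (M + N) => x; apply: le_trans (ler_normD _ _) _; exact: lerD.
Qed.

Lemma bounded_measurableN {f} : bounded_measurable f ->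
  bounded_measurable (fun x => - f x).
Proof.
move=> [mf [M hM]]; split; first exact: measurable_funN.
by exists M => x; rewrite normrN.
Qed.

Lemma bounded_measurableB {f g} : bounded_measurable f -> bounded_measurable g ->
  bounded_measurable (fun x => f x - g x).
Proof. by move=> bf /bounded_measurableN; exact: bounded_measurableD. Qed.

Lemma bounded_measurableM {f g} : bounded_measurable f -> bounded_measurable g ->
  bounded_measurable (fun x => f x * g x).
Proof.
move=> [mf [M hM]] [mg [N hN]]; split; first exact: measurable_funM.
by exists (M * N) => x; rewrite normrM; exact: ler_pM.
Qed.

Lemma bounded_measurable_expR {f} : bounded_measurable f ->
  bounded_measurable (fun x => expR (f x)).
Proof.
move=> [mf [M hM]]; split; first exact: measurableT_comp (@measurable_expR R) mf.
exists (expR M) => x; rewrite ger0_norm ?expR_ge0 // ler_expR.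
exact: le_trans (ler_norm _) (hM x).
Qed.

Lemma bounded_measurable_bounded_near {f} : bounded_measurable f ->
  [bounded f x | x in setT].
Proof.
move=> [_ [M hM]]; rewrite /bounded_near; near=> M' => x _.
apply: le_trans (hM x) _; near: M'.
exact/nbhs_pinfty_ge/num_real.
Unshelve. all: by end_near.
Qed.

End bounded_measurable.

Section finite_measure_Rintegral.
Context {R : realType} {d : measure_display} {T : measurableType d}.
Variable mu : {finite_measure set T -> \bar R}.
Implicit Types (f g : T -> R) (c : R).

Lemma finite_measureT_lty : (mu setT < +oo)%E.
Proof. exact/fin_num_fun_lty/fin_num_measure. Qed.

Lemma bounded_measurable_integrable {f} : bounded_measurable f ->
  mu.-integrable setT (EFin \o f).
Proof.
move=> bf; apply: measurable_bounded_integrable finite_measureT_lty _ _ => //.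
  by case: bf.
exact: bounded_measurable_bounded_near.
Qed.

Lemma le_Rintegral_bounded f g :
  bounded_measurable f -> bounded_measurable g -> (forall x, f x <= g x) ->
  Rintegral mu setT f <= Rintegral mu setT g.
Proof.
by move=> bf bg fg; apply: le_Rintegral => //; exact: bounded_measurable_integrable.
Qed.

Lemma RintegralD_bounded f g : bounded_measurable f -> bounded_measurable g ->
  Rintegral mu setT (fun x => f x + g x) = Rintegral mu setT f + Rintegral mu setT g.
Proof. by move=> bf bg; apply: RintegralD => //; exact: bounded_measurable_integrable. Qed.

Lemma RintegralZl_bounded c f : bounded_measurable f ->
  Rintegral mu setT (fun x => c * f x) = c * Rintegral mu setT f.
Proof. by move=> bf; apply: RintegralZl => //; exact: bounded_measurable_integrable. Qed.

End finite_measure_Rintegral.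

Section sup_range.
Context {R : realType} {T : Type}.
Implicit Types u : T -> R.

Lemma le_sup_range {u M} : (forall x, u x <= M) -> forall x, u x <= sup (range u).
Proof. by move=> hM x; apply: ub_le_sup; [exists M => _ [y _ <-] | exists x]. Qed.

Lemma sup_range_norm_le {u M} (x0 : T) : (forall x, `|u x| <= M) ->
  `|sup (range u)| <= M.
Proof.
move=> hM; have uM x : u x <= M := le_trans (ler_norm _) (hM x).
rewrite ler_norml; apply/andP; split.
  apply: le_trans _ (le_sup_range uM x0).
  by have := hM x0; rewrite ler_norml => /andP[].
by apply: ge_sup; [exists (u x0), x0 | move=> _ [y _ <-]].
Qed.

Lemma le0_of_contraction u (gamma : R) : gamma < 1 ->
  (exists M, forall x, u x <= M) ->
  (forall c, (forall x, u x <= c) -> forall x, u x <= gamma * c) ->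
  forall x, u x <= 0.
Proof.
move=> gamma_lt1 [M uM] contract x; have u_le_sup := le_sup_range uM.
have : sup (range u) <= gamma * sup (range u).
  by apply: ge_sup; [exists (u x), x | move=> _ [y _ <-]; exact: contract].
have := u_le_sup x; nra.
Qed.

End sup_range.

Section bounded_measurable2.
Context {R : realType} {d1 d2 : measure_display}
  {S : measurableType d1} {A : measurableType d2}.
Implicit Types f : S -> A -> R.

Definition bounded_measurable2 f := bounded_measurable (fun x : S * A => f x.1 x.2).

Lemma bounded_measurable2_of {f} : measurable2 f -> bounded2 f -> bounded_measurable2 f.
Proof. by move=> mf [M hM]; split => //; exists M => -[s a]. Qed.

Lemma bounded_measurable2_bounded2 {f} : bounded_measurable2 f -> bounded2 f.
Proof. by move=> [_ [M hM]]; exists M => s a; exact: (hM (s, a)). Qed.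

Lemma bounded_measurable2_section {f} s : bounded_measurable2 f ->
  bounded_measurable (f s).
Proof.
move=> [mf [M hM]]; split; first exact: measurable_fun_pair2 mf.
by exists M => a; exact: (hM (s, a)).
Qed.

Lemma bounded_measurable2_fst {g : S -> R} : bounded_measurable g ->
  bounded_measurable2 (fun s _ => g s).
Proof.
move=> [mg [M hM]]; split; first exact: measurableT_comp mg measurable_fst.
by exists M => x; exact: hM.
Qed.

Lemma le_sup_range_bounded2 {f} : bounded2 f -> forall s a, f s a <= sup (range (f s)).
Proof.
move=> [M fM] s; apply: (le_sup_range (M := M)) => a.
exact: le_trans (ler_norm _) (fM s a).
Qed.

Lemma bounded_measurable_sup_range {f} : bounded_measurable2 f ->
  measurable_fun setT (fun s => sup (range (f s))) ->
  bounded_measurable (fun s => sup (range (f s))).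
Proof.
move=> [_ [M fM]] msup; split => //; exists M => s.
by apply: (sup_range_norm_le point) => a; exact: fM (s, a).
Qed.

(* Measurability in s is Fubini-Tonelli applied to the nonnegative f + M. *)
Lemma bounded_measurable_Rintegral (mu : {finite_measure set A -> \bar R}) {f} :
  bounded_measurable2 f -> bounded_measurable (fun s => Rintegral mu setT (f s)).
Proof.
move=> bf; have [mf [M hM]] := bf.
have bfs s : bounded_measurable (f s) := bounded_measurable2_section s bf.
pose g := EFin \o (fun x : S * A => f x.1 x.2 + M).
have mg : measurable_fun setT g.
  by apply/measurable_EFinP; apply: measurable_funD => //; exact: measurable_cst.
have g_ge0 x : (0 <= g x)%E.
  by rewrite lee_fin -lerBlDr sub0r; have := hM x; rewrite ler_norml => /andP[].
have fE : (fun s => Rintegral mu setT (f s)) =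
    (fun s => fine (fubini_F mu g s) - M * fine (mu setT)).
  apply/funext => s; rewrite -Rintegral_cst //.
  have -> : fine (fubini_F mu g s) = Rintegral mu setT (fun a => f s a + M) by [].
  by rewrite RintegralD_bounded //; [ring | exact: bounded_measurable_cst].
split.
  rewrite fE; apply: measurable_funB; last exact: measurable_cst.
  exact: measurableT_comp (fine_measurable _) (measurable_fun_fubini_tonelli_F _ mg g_ge0).
exists (M * fine (mu setT)) => s.
apply: le_trans (le_normr_Rintegral measurableT (bounded_measurable_integrable mu (bfs s))) _.
rewrite -Rintegral_cst //; apply: le_Rintegral_bounded.
- have [ms _] := bfs s; split; first exact: measurableT_comp ms.
  by exists M => a; rewrite normr_id; exact: (hM (s, a)).
- exact: bounded_measurable_cst.
- by move=> a; exact: (hM (s, a)).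
Qed.

End bounded_measurable2.


Lemma sqrtrM_le_mean {R : rcfType} (x y : R) : 0 <= x -> 0 <= y ->
  Num.sqrt (x * y) <= (x + y) / 2.
Proof.
move=> x0 y0; rewrite -[leRHS]ger0_norm ?divr_ge0 ?addr_ge0 //.
by rewrite -sqrtr_sqr ler_sqrt ?sqr_ge0 // leif_AGM2.
Qed.

Section soft_value.
Context {R : realType} {d1 d2 : measure_display}
  {S : measurableType d1} {A : measurableType d2}.
Context {muA : {finite_measure set A -> \bar R}}.
Hypothesis muA_gt0 : (0 < muA setT)%E.
Implicit Types (Q : S -> A -> R) (s : S) (a : A) (c : R).

Local Notation V := (soft_value muA).
Local Notation partition Q s := (Rintegral muA setT (fun a => expR (Q s a))).

Lemma partition_gt0 Q s : bounded_measurable2 Q -> 0 < partition Q s.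
Proof.
move=> bQ; have [_ [M hM]] := bQ.
have mA_gt0 : 0 < fine (muA setT).
  by apply: fine_gt0; rewrite muA_gt0 finite_measureT_lty.
apply: (@lt_le_trans _ _ (expR (- M) * fine (muA setT))).
  by rewrite mulr_gt0 ?expR_gt0.
rewrite -Rintegral_cst //; apply: le_Rintegral_bounded.
- exact: bounded_measurable_cst.
- exact: bounded_measurable_expR (bounded_measurable2_section s bQ).
- move=> a; rewrite ler_expR.
  by have := hM (s, a); rewrite ler_norml => /andP[].
Qed.

Lemma expR_soft_value Q s : bounded_measurable2 Q -> expR (V Q s) = partition Q s.
Proof. by move=> bQ; rewrite lnK // posrE partition_gt0. Qed.

Lemma Rintegral_expR_addr Q s c : bounded_measurable2 Q ->
  Rintegral muA setT (fun a => expR (Q s a + c)) = expR (V Q s + c).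
Proof.
move=> bQ; under eq_Rintegral do rewrite expRD mulrC.
rewrite RintegralZl_bounded; last exact: bounded_measurable_expR (bounded_measurable2_section s bQ).
by rewrite expRD expR_soft_value // mulrC.
Qed.

Lemma soft_value_le_add Q Q' s c :
  bounded_measurable2 Q -> bounded_measurable2 Q' ->
  (forall a, Q s a <= Q' s a + c) -> V Q s <= V Q' s + c.
Proof.
move=> bQ bQ' QQ'; rewrite -ler_expR expR_soft_value // -Rintegral_expR_addr //.
apply: le_Rintegral_bounded => [||a]; last by rewrite ler_expR.
  exact: bounded_measurable_expR (bounded_measurable2_section s bQ).
apply/bounded_measurable_expR/bounded_measurableD; last exact: bounded_measurable_cst.
exact: bounded_measurable2_section.
Qed.

Lemma bounded_measurable_soft_value {Q} : bounded_measurable2 Q ->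
  bounded_measurable (V Q).
Proof.
move=> bQ; split.
  apply: measurableT_comp (@measurable_ln R) _.
  have bexpQ : bounded_measurable2 (fun s a => expR (Q s a)) := bounded_measurable_expR bQ.
  by have [] := bounded_measurable_Rintegral muA bexpQ.
have [_ [M hM]] := bQ; have b0 := @bounded_measurable_cst R _ (S * A)%type 0.
pose L := ln (fine (muA setT)).
have V0 s : V (fun _ _ => 0) s = L.
  rewrite /soft_value /=; under eq_Rintegral do rewrite expR0.
  by rewrite Rintegral_cst // mul1r.
exists (`|L| + M) => s.
have QM a : Q s a <= M /\ - M <= Q s a.
  by have := hM (s, a); rewrite ler_norml => /andP[].
have h1 : V Q s <= L + M.
  by rewrite -(V0 s); apply: soft_value_le_add => // a; rewrite add0r; case: (QM a).
have h2 : L <= V Q s + M.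
  by rewrite -(V0 s); apply: soft_value_le_add => // a; rewrite -lerBlDr sub0r; case: (QM a).
have := ler_norm L; have := ler_norm (- L); rewrite normrN => ? ?.
by rewrite ler_norml; apply/andP; split; lra.
Qed.

Lemma soft_policyE Q s a : bounded_measurable2 Q ->
  soft_policy muA Q s a = expR (Q s a - V Q s).
Proof. by move=> bQ; rewrite expRB expR_soft_value. Qed.

Lemma ln_soft_policy Q s a : bounded_measurable2 Q ->
  ln (soft_policy muA Q s a) = Q s a - V Q s.
Proof. by move=> bQ; rewrite soft_policyE // expRK. Qed.

Lemma bounded_measurable2_soft_policy {Q} : bounded_measurable2 Q ->
  bounded_measurable2 (soft_policy muA Q).
Proof.
move=> bQ; rewrite /bounded_measurable2.
under [X in bounded_measurable X]eq_fun do rewrite soft_policyE //.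
apply/bounded_measurable_expR/bounded_measurableB => //.
exact/bounded_measurable2_fst/bounded_measurable_soft_value.
Qed.

Lemma bounded_measurable2_ln_soft_policy {Q} : bounded_measurable2 Q ->
  bounded_measurable2 (fun s a => ln (soft_policy muA Q s a)).
Proof.
move=> bQ; rewrite /bounded_measurable2.
under [X in bounded_measurable X]eq_fun do rewrite ln_soft_policy //.
apply/bounded_measurableB => //.
exact/bounded_measurable2_fst/bounded_measurable_soft_value.
Qed.

Lemma Rintegral_soft_policy Q s : bounded_measurable2 Q ->
  Rintegral muA setT (soft_policy muA Q s) = 1.
Proof.
move=> bQ; have -> : soft_policy muA Q s = fun a => expR (Q s a - V Q s).
  by apply/funext => a; exact: soft_policyE.
by rewrite Rintegral_expR_addr // subrr expR0.
Qed.

Lemma bounded_measurable_Eact {pol : S -> A -> R} {f : S -> A -> R} :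
  bounded_measurable2 pol -> bounded_measurable2 f ->
  bounded_measurable (fun s => Eact muA pol s (f s)).
Proof. by move=> bpol bf; exact: bounded_measurable_Rintegral (bounded_measurableM bpol bf). Qed.

Lemma EactD {pol : S -> A -> R} {s} {f g : A -> R} :
  bounded_measurable (pol s) -> bounded_measurable f -> bounded_measurable g ->
  Eact muA pol s (fun a => f a + g a) = Eact muA pol s f + Eact muA pol s g.
Proof.
move=> bpol bf bg; rewrite /Eact -RintegralD_bounded; try exact: bounded_measurableM.
by under eq_Rintegral do rewrite mulrDr.
Qed.

Lemma le_Eact_soft_policy Q s (f : A -> R) c :
  bounded_measurable2 Q -> bounded_measurable f -> (forall a, c <= f a) ->
  c <= Eact muA (soft_policy muA Q) s f.
Proof.
move=> bQ bf cf; have bpi := bounded_measurable2_section s (bounded_measurable2_soft_policy bQ).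
rewrite -[leLHS]mulr1 -(Rintegral_soft_policy Q s bQ) -RintegralZl_bounded //.
apply: le_Rintegral_bounded => [||a].
- exact: bounded_measurableM (bounded_measurable_cst _) bpi.
- exact: bounded_measurableM bpi bf.
- by rewrite mulrC ler_wpM2l // soft_policyE ?expR_ge0.
Qed.

Section composition.
Context {Q1 Q2 : S -> A -> R}.
Hypotheses (bQ1 : bounded_measurable2 Q1) (bQ2 : bounded_measurable2 Q2).

Let bQmean : bounded_measurable2 (fun s a => (Q1 s a + Q2 s a) / 2).
Proof. exact/bounded_measurableM/bounded_measurable_cst/bounded_measurableD. Qed.

Lemma sqrt_soft_policyM s a :
  Num.sqrt (soft_policy muA Q1 s a * soft_policy muA Q2 s a) =
  expR ((Q1 s a + Q2 s a) / 2 - (V Q1 s + V Q2 s) / 2).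
Proof.
have twice (x1 x2 v1 v2 : R) :
    x1 - v1 + (x2 - v2) = ((x1 + x2) / 2 - (v1 + v2) / 2) * 2%:R by field.
by rewrite !soft_policyE // -expRD twice expRM_natr sqrtr_sqr ger0_norm ?expR_ge0.
Qed.

Lemma Rintegral_sqrt_soft_policyM s :
  Rintegral muA setT (fun a => Num.sqrt (soft_policy muA Q1 s a * soft_policy muA Q2 s a)) =
  expR (V (fun s a => (Q1 s a + Q2 s a) / 2) s - (V Q1 s + V Q2 s) / 2).
Proof.
under eq_Rintegral do rewrite sqrt_soft_policyM.
exact: Rintegral_expR_addr.
Qed.

Lemma renyi_half_soft_policy s :
  renyi_half muA (soft_policy muA Q1 s) (soft_policy muA Q2 s) =
  V Q1 s + V Q2 s - 2 * V (fun s a => (Q1 s a + Q2 s a) / 2) s.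
Proof.
rewrite /renyi_half Rintegral_sqrt_soft_policyM expRK.
by move: (V Q1 s) (V Q2 s) (V _ s) => v1 v2 v; field.
Qed.

Lemma soft_value_mean_le s :
  V (fun s a => (Q1 s a + Q2 s a) / 2) s <= (V Q1 s + V Q2 s) / 2.
Proof.
have bpi Q : bounded_measurable2 Q -> bounded_measurable (soft_policy muA Q s).
  by move=> bQ; exact/bounded_measurable2_section/bounded_measurable2_soft_policy.
have [bpi1 bpi2] := (bpi _ bQ1, bpi _ bQ2).
rewrite -subr_le0 -expR_le1 -Rintegral_sqrt_soft_policyM.
under eq_Rintegral do rewrite sqrt_soft_policyM.
have mean1 : Rintegral muA setT
    (fun a => (soft_policy muA Q1 s a + soft_policy muA Q2 s a) / 2) = 1.
  under eq_Rintegral do rewrite mulrC.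
  rewrite RintegralZl_bounded; last exact: bounded_measurableD bpi1 bpi2.
  by rewrite RintegralD_bounded // !Rintegral_soft_policy //; field.
rewrite -[leRHS]mean1; apply: le_Rintegral_bounded => [||a].
- apply: bounded_measurable_expR; apply: bounded_measurableB.
    exact: bounded_measurable2_section s bQmean.
  exact: bounded_measurable_cst.
- exact: bounded_measurableM (bounded_measurableD bpi1 bpi2) (bounded_measurable_cst _).
- by rewrite -sqrt_soft_policyM sqrtrM_le_mean // soft_policyE ?expR_ge0.
Qed.

End composition.

End soft_value.

Section expected_next.
Context {R : realType} {d1 d2 : measure_display}
  {S : measurableType d1} {A : measurableType d2}.
Context {muS : {measure set S -> \bar R}} {p : S -> A -> S -> R}.
Hypothesis p_density : is_transition_density muS p.
Implicit Types (s : S) (a : A) (f g : S -> R) (c : R).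

Local Notation E := (Enext muS p).

Lemma integrable_transition_density s a : muS.-integrable setT (EFin \o p s a).
Proof.
have [mp p_ge0 p1] := p_density.
apply/integrableP; split; first exact/measurable_EFinP/(measurable_fun_pair2 (s, a) mp).
under eq_integral do rewrite /= ger0_norm //.
by rewrite p1 ltry.
Qed.

Lemma integrable_Enext s a f : bounded_measurable f ->
  muS.-integrable setT (EFin \o (fun x => p s a x * f x)).
Proof.
move=> bf; have [mf _] := bf.
have := integrableMl measurableT (integrable_transition_density s a) mf
  (bounded_measurable_bounded_near bf).
by apply: eq_integrable => // x _ /=; rewrite EFinM.
Qed.

Lemma le_Enext s a f g : bounded_measurable f -> bounded_measurable g ->
  (forall x, f x <= g x) -> E s a f <= E s a g.
Proof.
have [_ p_ge0 _] := p_density.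
move=> bf bg fg; apply: le_Rintegral => //; try exact: integrable_Enext.
by move=> x _; exact: ler_wpM2l.
Qed.

Lemma Enext_cst s a c : E s a (fun=> c) = c.
Proof.
have [_ _ p1] := p_density.
rewrite /Enext RintegralZr //; last exact: integrable_transition_density.
by rewrite /Rintegral p1 mul1r.
Qed.

Lemma EnextD s a f g : bounded_measurable f -> bounded_measurable g ->
  E s a (fun x => f x + g x) = E s a f + E s a g.
Proof.
move=> bf bg; rewrite /Enext -RintegralD //; try exact: integrable_Enext.
by under eq_Rintegral do rewrite mulrDr.
Qed.

Lemma EnextZr s a f c : bounded_measurable f ->
  E s a (fun x => f x * c) = E s a f * c.
Proof.
move=> bf; rewrite /Enext -RintegralZr //; last exact: integrable_Enext.
by under eq_Rintegral do rewrite mulrA.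
Qed.

Lemma Enext_le_add s a f g c : bounded_measurable f -> bounded_measurable g ->
  (forall x, f x <= g x + c) -> E s a f <= E s a g + c.
Proof.
move=> bf bg fg; rewrite -[X in _ + X](Enext_cst s a) -EnextD //; last first.
  exact: bounded_measurable_cst.
by apply: le_Enext => //; apply: bounded_measurableD => //; exact: bounded_measurable_cst.
Qed.

Lemma Enext_comparison (gamma : R) (u : S -> A -> R) f g :
  0 <= gamma -> gamma < 1 -> bounded2 u ->
  bounded_measurable f -> bounded_measurable g ->
  (forall s a, u s a = gamma * (E s a f - E s a g)) ->
  (forall c, (forall s a, u s a <= c) -> forall x, f x <= g x + c) ->
  forall s a, u s a <= 0.
Proof.
move=> gamma_ge0 gamma_lt1 [M uM] bf bg uE fg s a.
apply: (le0_of_contraction (fun x : S * A => u x.1 x.2) _ gamma_lt1 _ _ (s, a)).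
  by exists M => x; exact: le_trans (ler_norm _) (uM _ _).
move=> c uc [s' a'] /=; rewrite uE ler_wpM2l // lerBlDl.
apply: Enext_le_add => //; exact: fg c (fun s a => uc (s, a)).
Qed.

End expected_next.

Section composed_soft_policy.
Context {d1 d2 : measure_display} {R : realType}
  {S : measurableType d1} {A : measurableType d2}
  {muS : {measure set S -> \bar R}} {muA : {finite_measure set A -> \bar R}}
  {gamma : R} {p : S -> A -> S -> R} {r1 r2 Q1 Q2 QC Cs Ds Qpi : S -> A -> R}.

Let QSig s a := (Q1 s a + Q2 s a) / 2.
Let rC s a := (r1 s a + r2 s a) / 2.
Let piSig := soft_policy muA QSig.
Local Notation V := (soft_value muA).
Local Notation E := (Enext muS p).

Hypotheses (muA_gt0 : (0 < muA setT)%E) (gamma_ge0 : 0 <= gamma) (gamma_lt1 : gamma < 1)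
  (p_density : is_transition_density muS p).
Hypotheses (bQ1 : bounded_measurable2 Q1) (bQ2 : bounded_measurable2 Q2)
  (bQC : bounded_measurable2 QC) (bCs : bounded_measurable2 Cs)
  (bDs : bounded_measurable2 Ds) (bQpi : bounded_measurable2 Qpi)
  (mCs_sup : measurable_fun setT (fun s => sup (range (Cs s)))).
Hypotheses (Q1_fix : forall s a, Q1 s a = soft_bellman muS muA gamma p r1 Q1 s a)
  (Q2_fix : forall s a, Q2 s a = soft_bellman muS muA gamma p r2 Q2 s a)
  (QC_fix : forall s a, QC s a = soft_bellman muS muA gamma p rC QC s a)
  (Cs_fix : forall s a, Cs s a =
    C_backup muS muA gamma p (soft_policy muA Q1) (soft_policy muA Q2) Cs s a)
  (Ds_fix : forall s a, Ds s a = D_backup muS muA gamma p piSig Cs Ds s a)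
  (Qpi_fix : forall s a, Qpi s a = soft_eval muS muA gamma p rC piSig Qpi s a).

Let bQSig : bounded_measurable2 QSig.
Proof. exact/bounded_measurableM/bounded_measurable_cst/bounded_measurableD. Qed.

Let bV1 := bounded_measurable_soft_value muA_gt0 bQ1.
Let bV2 := bounded_measurable_soft_value muA_gt0 bQ2.
Let bVC := bounded_measurable_soft_value muA_gt0 bQC.
Let bVSig := bounded_measurable_soft_value muA_gt0 bQSig.

Lemma QC_le_QSig s a : QC s a <= QSig s a.
Proof.
rewrite -subr_le0; move: s a.
apply: (Enext_comparison p_density gamma (fun s a => QC s a - QSig s a)
  (V QC) (fun s => (V Q1 s + V Q2 s) / 2) gamma_ge0 gamma_lt1).
- exact/bounded_measurable2_bounded2/bounded_measurableB.
- exact: bVC.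
- exact: bounded_measurableM (bounded_measurableD bV1 bV2) (bounded_measurable_cst _).
- move=> s a; rewrite (QC_fix s a) /QSig (Q1_fix s a) (Q2_fix s a) /soft_bellman /rC.
  rewrite (EnextZr p_density); last exact: bounded_measurableD.
  rewrite (EnextD p_density) //.
  (* ring and lra are very slow on the integral terms themselves, hence the
     generalize before each call. *)
  by generalize (E s a (V QC)) (E s a (V Q1)) (E s a (V Q2)) => ? ? ?; ring.
- move=> c uc x; apply: le_trans (_ : V QC x <= V QSig x + c) _.
    by apply: soft_value_le_add => // b; rewrite -lerBlDl.
  by rewrite lerD2r; exact: soft_value_mean_le.
Qed.

Lemma QSig_sub_QC_le_Cs s a : QSig s a - QC s a <= Cs s a.
Proof.
have Cs_le_sup := le_sup_range_bounded2 (bounded_measurable2_bounded2 bCs).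
have bsup := bounded_measurable_sup_range bCs mCs_sup.
have renyiE x : renyi_half muA (soft_policy muA Q1 x) (soft_policy muA Q2 x) =
    V Q1 x + V Q2 x - 2 * V QSig x := renyi_half_soft_policy muA_gt0 bQ1 bQ2 x.
have brenyi : bounded_measurable
    (fun x => renyi_half muA (soft_policy muA Q1 x) (soft_policy muA Q2 x)).
  rewrite (funext renyiE); apply: bounded_measurableB (bounded_measurableD bV1 bV2) _.
  exact: bounded_measurableM (bounded_measurable_cst _) bVSig.
have bCsup := bounded_measurableD brenyi bsup.
rewrite -subr_le0; move: s a.
apply: (Enext_comparison p_density gamma (fun s a => QSig s a - QC s a - Cs s a)
  (fun s => (V Q1 s + V Q2 s) / 2) (fun s => V QC s +
    (renyi_half muA (soft_policy muA Q1 s) (soft_policy muA Q2 s) + sup (range (Cs s))))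
  gamma_ge0 gamma_lt1).
- exact/bounded_measurable2_bounded2/bounded_measurableB/bCs/bounded_measurableB.
- exact: bounded_measurableM (bounded_measurableD bV1 bV2) (bounded_measurable_cst _).
- exact: bounded_measurableD bVC bCsup.
- move=> s a; rewrite /QSig (Q1_fix s a) (Q2_fix s a) (QC_fix s a) (Cs_fix s a).
  have bV12 := bounded_measurableD bV1 bV2.
  rewrite /soft_bellman /C_backup /rC (EnextD p_density s a _ _ bVC bCsup).
  rewrite (EnextZr p_density s a _ _ bV12) (EnextD p_density s a _ _ bV1 bV2).
  generalize (E s a (V Q1)) (E s a (V Q2)) (E s a (V QC)).
  by generalize (E s a (fun s => renyi_half muA (soft_policy muA Q1 s)
    (soft_policy muA Q2 s) + sup (range (Cs s)))) => ? ? ? ?; ring.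
- move=> c Cc x; rewrite renyiE.
  have mean_le : V QSig x <= (V Q1 x + V Q2 x) / 2 := soft_value_mean_le muA_gt0 bQ1 bQ2 x.
  have : V QSig x <= V QC x + (sup (range (Cs x)) + c).
    apply: soft_value_le_add => // b.
    move: (Cc x b) (Cs_le_sup x b).
    by generalize (QSig x b) (QC x b) (Cs x b) (sup (range (Cs x))) => ? ? ? ?; lra.
  move: mean_le.
  by generalize (V Q1 x) (V Q2 x) (V QSig x) (V QC x) (sup (range (Cs x))) => ? ? ? ? ?; lra.
Qed.

Let bpiSig : bounded_measurable2 piSig := bounded_measurable2_soft_policy muA_gt0 bQSig.
Let bX : bounded_measurable2 (fun s a => Qpi s a - ln (piSig s a)) :=
  bounded_measurableB bQpi (bounded_measurable2_ln_soft_policy muA_gt0 bQSig).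
Let bY : bounded_measurable2 (fun s a => Cs s a + Ds s a) := bounded_measurableD bCs bDs.

Lemma QC_sub_Qpi_le_Ds s a : QC s a - Qpi s a <= Ds s a.
Proof.
have bEX : bounded_measurable
    (fun s => Eact muA piSig s (fun b => Qpi s b - ln (piSig s b))) :=
  bounded_measurable_Eact bpiSig bX.
have bEY : bounded_measurable (fun s => Eact muA piSig s (fun b => Cs s b + Ds s b)) :=
  bounded_measurable_Eact bpiSig bY.
rewrite -subr_le0; move: s a.
apply: (Enext_comparison p_density gamma (fun s a => QC s a - Qpi s a - Ds s a) (V QC)
  (fun s => Eact muA piSig s (fun b => Qpi s b - ln (piSig s b)) +
    Eact muA piSig s (fun b => Cs s b + Ds s b)) gamma_ge0 gamma_lt1).
- exact/bounded_measurable2_bounded2/bounded_measurableB/bDs/bounded_measurableB.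
- exact: bVC.
- exact: bounded_measurableD bEX bEY.
- move=> s a; rewrite (QC_fix s a) (Qpi_fix s a) (Ds_fix s a).
  rewrite /soft_bellman /soft_eval /D_backup (EnextD p_density s a _ _ bEX bEY).
  generalize (E s a (V QC)) (E s a (fun s => Eact muA piSig s (fun b => Qpi s b - ln (piSig s b)))).
  by generalize (E s a (fun s => Eact muA piSig s (fun b => Cs s b + Ds s b))) => ? ? ?; ring.
- move=> c Cc x.
  have VC_le : V QC x <= V QSig x + 0.
    by apply: soft_value_le_add => // b; rewrite addr0; exact: QC_le_QSig.
  have bXx : bounded_measurable (fun b => Qpi x b - ln (piSig x b)) :=
    bounded_measurable2_section x bX.
  have bYx : bounded_measurable (fun b => Cs x b + Ds x b) :=
    bounded_measurable2_section x bY.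
  rewrite -(EactD (bounded_measurable2_section x bpiSig) bXx bYx).
  have : V QSig x - c <= Eact muA piSig x
      (fun b => Qpi x b - ln (piSig x b) + (Cs x b + Ds x b)).
    apply: le_Eact_soft_policy => // [|b]; first exact: bounded_measurableD bXx bYx.
    rewrite ln_soft_policy //; move: (Cc x b) (QSig_sub_QC_le_Cs x b).
    by generalize (QSig x b) (QC x b) (Qpi x b) (Cs x b) (Ds x b) (V QSig x) => ? ? ? ? ? ?; lra.
  by move: VC_le; generalize (V QC x) (V QSig x) (Eact muA piSig x
      (fun b => Qpi x b - ln (piSig x b) + (Cs x b + Ds x b))) => ? ? ?; lra.
Qed.

End composed_soft_policy.

Theorem theorem1 (d1 d2 : measure_display) (R : realType)
  (S : measurableType d1) (A : measurableType d2)
  (muS : {measure set S -> \bar R}) (muA : {finite_measure set A -> \bar R})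
  (gamma : R) (p : S -> A -> S -> R) (r1 r2 : S -> A -> R)
  (Q1 Q2 QC Cs Ds QpiS : S -> A -> R) :
  (0 < muA setT)%E ->
  0 < gamma < 1 ->
  is_transition_density muS p ->
  measurable2 r1 -> bounded2 r1 ->
  measurable2 r2 -> bounded2 r2 ->
  (* Q1, Q2 : optimal soft Q-functions for r1, r2 *)
  measurable2 Q1 -> bounded2 Q1 ->
  (forall s a, Q1 s a = soft_bellman muS muA gamma p r1 Q1 s a) ->
  measurable2 Q2 -> bounded2 Q2 ->
  (forall s a, Q2 s a = soft_bellman muS muA gamma p r2 Q2 s a) ->
  let QSig := fun s a => (Q1 s a + Q2 s a) / 2 in
  let rC := fun s a => (r1 s a + r2 s a) / 2 in
  let pi1 := soft_policy muA Q1 in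
  let pi2 := soft_policy muA Q2 in
  let piSig := soft_policy muA QSig in
  (* QC : optimal soft Q-function for rC *)
  measurable2 QC -> bounded2 QC ->
  (forall s a, QC s a = soft_bellman muS muA gamma p rC QC s a) ->
  (* Cs : fixed point of the C-operator *)
  measurable2 Cs -> bounded2 Cs ->
  measurable_fun setT (fun s' => sup (range (Cs s'))) ->
  (forall s a, Cs s a = C_backup muS muA gamma p pi1 pi2 Cs s a) ->
  (* Ds : fixed point of the D-operator *)
  measurable2 Ds -> bounded2 Ds ->
  (forall s a, Ds s a = D_backup muS muA gamma p piSig Cs Ds s a) ->
  (* QpiS : soft Q-function of piSig for rC *)
  measurable2 QpiS -> bounded2 QpiS ->
  (forall s a, QpiS s a = soft_eval muS muA gamma p rC piSig QpiS s a) ->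
  forall s a, QC s a - Ds s a <= QpiS s a.
Proof.
(* The rewards cancel in every difference of backups: no regularity of r1, r2 is needed. *)
move=> muA_gt0 /andP[gamma_gt0 gamma_lt1] p_density _ _ _ _ mQ1 bQ1 Q1_fix mQ2 bQ2 Q2_fix
  QSig rC pi1 pi2 piSig mQC bQC QC_fix mCs bCs mCs_sup Cs_fix mDs bDs Ds_fix
  mQpi bQpi Qpi_fix s a.
rewrite lerBlDr -lerBlDl.
exact: (QC_sub_Qpi_le_Ds muA_gt0 (ltW gamma_gt0) gamma_lt1 p_density
  (bounded_measurable2_of mQ1 bQ1) (bounded_measurable2_of mQ2 bQ2)
  (bounded_measurable2_of mQC bQC) (bounded_measurable2_of mCs bCs)
  (bounded_measurable2_of mDs bDs) (bounded_measurable2_of mQpi bQpi) mCs_sup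
  Q1_fix Q2_fix QC_fix Cs_fix Ds_fix Qpi_fix s a).
Qed.
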